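(* Let $\gamma$ be a consistent family of grafts for a tree $\mathcal T$. Then the hybrid $\mathrm{hybr}(\mathcal T,\gamma)$ is a tree.
   Context: A tree is a pair $\mathcal T=(Q,<_{\mathcal T})$ with $<_{\mathcal T}$ irreflexive transitive such that each set $\{v:v<_{\mathcal T}x\}$ is well-ordered; nodes are elements of $Q$; $x\parallel_{\mathcal T}y$ means $x,y$ incomparable; $\max\mathcal T$ = set of maximal nodes; $0_{\mathcal T}$ = least node (if it exists); for a set $A$ of nodes $A{\downarrow}_{\mathcal T}=\{v:\exists a\in A\ a\le_{\mathcal T}v\}$; if $A$ is an antichain and $x\in A{\downarrow}_{\mathcal T}$, $\mathrm{root}_{\mathcal T}(x,A)$ is the unique $r\in A$ with $r\le_{\mathcal T}x$. A graft for $\mathcal T$ is a tree $\mathcal G$ with more than one node, with a least node $0_{\mathcal G}\in\mathrm{nodes}\,\mathcal T$, such that $\max\mathcal G\subseteq\{v\in\mathrm{nodes}\,\mathcal T: v>_{\mathcal T}0_{\mathcal G}\}$, $\max\mathcal G$ is an antichain in $\mathcal T$, and the implant $\mathrm{impl}\,\mathcal G:=\mathrm{nodes}\,\mathcal G\setminus(\{0_{\mathcal G}\}\cup\max\mathcal G)$ is disjoint from $\mathrm{nodes}\,\mathcal T$. The explant is $\mathrm{expl}(\mathcal T,\mathcal G)=\{v:v>_{\mathcal T}0_{\mathcal G}\}\setminus(\max\mathcal G){\downarrow}_{\mathcal T}$. A family $\gamma$ is a consistent family of grafts for $\mathcal T$ if each member is a graft for $\mathcal T$, distinct members have disjoint implants,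 and for distinct $\mathcal D,\mathcal E\in\gamma$: $0_{\mathcal D}\parallel_{\mathcal T}0_{\mathcal E}$, or $0_{\mathcal D}\in(\max\mathcal E){\downarrow}_{\mathcal T}$, or $0_{\mathcal E}\in(\max\mathcal D){\downarrow}_{\mathcal T}$. The support is $\mathrm{supp}(\mathcal T,\gamma)=\mathrm{nodes}\,\mathcal T\setminus\bigcup_{\mathcal G\in\gamma}\mathrm{expl}(\mathcal T,\mathcal G)$. The hybrid $\mathrm{hybr}(\mathcal T,\gamma)=(H,<)$ has $H=\mathrm{supp}(\mathcal T,\gamma)\cup\bigcup_{\mathcal G\in\gamma}\mathrm{impl}\,\mathcal G$ and $x<y$ iff one of: (b1) $x,y\in\mathrm{supp}$ and $x<_{\mathcal T}y$; (b2) for some $\mathcal G\in\gamma$, $x,y\in\mathrm{impl}\,\mathcal G$ and $x<_{\mathcal G}y$; (b3) for some $\mathcal G\in\gamma$, $x\in\mathrm{supp}$, $y\in\mathrm{impl}\,\mathcal G$, $x\le_{\mathcal T}0_{\mathcal G}$; (b4) for some $\mathcal G\in\gamma$, $x\in\mathrm{impl}\,\mathcal G$, $y\in\mathrm{supp}\cap(\max\mathcal G){\downarrow}_{\mathcal T}$, and $x<_{\mathcal G}\mathrm{root}_{\mathcal T}(y,\max\mathcal G)$; (b5) for some distinct $\mathcal D,\mathcal E\in\gamma$, $x\in\mathrm{impl}\,\mathcal D$, $y\in\mathrm{impl}\,\mathcal E$, $0_{\mathcal E}\in(\max\mathcal D){\downarrow}_{\mathcal T}$, and $x<_{\mathcal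 D}\mathrm{root}_{\mathcal T}(0_{\mathcal E},\max\mathcal D)$. *)

Set Implicit Arguments.

Record tree (U : Type) := mkTree { nodes : U -> Prop; tlt : U -> U -> Prop }.
Arguments mkTree {U}.

Section TreeDefs.
Variable U : Type.
Implicit Types (T G : tree U) (A : U -> Prop).

Definition tle T (x y : U) : Prop := x = y \/ tlt T x y.

Definition incomp T (x y : U) : Prop := ~ tle T x y /\ ~ tle T y x.

Definition well_ordered_by T A : Prop :=
  (forall a b, A a -> A b -> a = b \/ tlt T a b \/ tlt T b a) /\
  (forall S : U -> Prop, (forall a, S a -> A a) -> (exists a, S a) ->
     exists m, S m /\ forall a, S a -> tle T m a).

Definition is_tree T : Prop :=
  (forall x y, tlt T x y -> nodes T x /\ nodes T y) /\
  (forall x, ~ tlt T x x) /\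
  (forall x y z, tlt T x y -> tlt T y z -> tlt T x z) /\
  (forall x, nodes T x -> well_ordered_by T (fun v => tlt T v x)).

Definition max_nodes T (v : U) : Prop := nodes T v /\ ~ (exists w, tlt T v w).

Definition is_least T (z : U) : Prop :=
  nodes T z /\ forall v, nodes T v -> tle T z v.

Definition antichain T A : Prop :=
  forall a b, A a -> A b -> a <> b -> incomp T a b.

Definition down T A (v : U) : Prop := exists a, A a /\ tle T a v.

Definition is_root T A (x r : U) : Prop := A r /\ tle T r x.

Definition impl G (o : U) (v : U) : Prop :=
  nodes G v /\ v <> o /\ ~ max_nodes G v.

Definition is_graft T G (o : U) : Prop :=
  is_tree G /\
  (exists a b, nodes G a /\ nodes G b /\ a <> b) /\
  is_least G o /\ nodes T o /\
  (forall v, max_nodes G v -> nodes T v /\ tlt T o v) /\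
  antichain T (max_nodes G) /\
  (forall v, impl G o v -> ~ nodes T v).

Definition expl T G (o : U) (v : U) : Prop :=
  tlt T o v /\ ~ down T (max_nodes G) v.

(* A family gamma is given as an indexed family g : I -> tree U, together with
   the least nodes o i = 0_(g i); distinct members = distinct indices. *)
Definition consistent (I : Type) T (g : I -> tree U) (o : I -> U) : Prop :=
  (forall i, is_graft T (g i) (o i)) /\
  (forall i j, i <> j -> forall v, impl (g i) (o i) v -> ~ impl (g j) (o j) v) /\
  (forall i j, i <> j ->
     incomp T (o i) (o j) \/ down T (max_nodes (g j)) (o i)
     \/ down T (max_nodes (g i)) (o j)).

Definition supp (I : Type) T (g : I -> tree U) (o : I -> U) (v : U) : Prop :=
  nodes T v /\ forall i, ~ expl T (g i) (o i) v.

Definition hybr_nodes (I : Type) T (g : I -> tree U) (o : I -> U) (v : U) : Prop :=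
  supp T g o v \/ exists i, impl (g i) (o i) v.

Definition hybr_lt (I : Type) T (g : I -> tree U) (o : I -> U) (x y : U) : Prop :=
  (supp T g o x /\ supp T g o y /\ tlt T x y) \/
  (exists i, impl (g i) (o i) x /\ impl (g i) (o i) y /\ tlt (g i) x y) \/
  (exists i, supp T g o x /\ impl (g i) (o i) y /\ tle T x (o i)) \/
  (exists i, impl (g i) (o i) x /\ supp T g o y /\ down T (max_nodes (g i)) y /\
     exists r, is_root T (max_nodes (g i)) y r /\ tlt (g i) x r) \/
  (exists i j, i <> j /\ impl (g i) (o i) x /\ impl (g j) (o j) y /\
     down T (max_nodes (g i)) (o j) /\
     exists r, is_root T (max_nodes (g i)) (o j) r /\ tlt (g i) x r).

Definition hybr (I : Type) T (g : I -> tree U) (o : I -> U) : tree U :=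
  mkTree (hybr_nodes T g o) (hybr_lt T g o).

End TreeDefs.

(* Every hybrid node has a shadow in T: a support node is its own shadow, an
   implant node has the root 0_G of its graft as shadow.  The shadow is
   monotone, and two comparable nodes with the same shadow are either that
   root followed by a node of its implant, or two nodes of one implant.
   Predecessors of a support node y are comparable because consistency puts
   the root of one of two grafts below y under a maximal node of the other;
   a least one among any nonempty set of them is found by first
   minimising the shadow in T and then minimising inside the single implant
   at that root.  The predecessors of an implant node of G are those of 0_G,
   then 0_G, then nodes of the implant, which reduces to the support case. *)
From Stdlib Require Import Classical Setoid.

Set Implicit Arguments.
Unset Strict Implicit.

Section TreeOrder.
Variables (U : Type) (T : tree U).
Hypothesis HT : is_tree T.

Lemma tree_lt_nodes x y : tlt T x y -> nodes T x /\ nodes T y.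
Proof. apply HT. Qed.

Lemma tree_lt_irrefl x : ~ tlt T x x.
Proof. apply HT. Qed.

Lemma tree_lt_trans x y z : tlt T x y -> tlt T y z -> tlt T x z.
Proof. apply HT. Qed.

Lemma tree_le_lt_trans x y z : tle T x y -> tlt T y z -> tlt T x z.
Proof. intros [->|lxy] lyz; eauto using tree_lt_trans. Qed.

Lemma tree_lt_le_trans x y z : tlt T x y -> tle T y z -> tlt T x z.
Proof. intros lxy [<-|lyz]; eauto using tree_lt_trans. Qed.

Lemma tree_le_trans x y z : tle T x y -> tle T y z -> tle T x z.
Proof. intros [->|lxy] lyz; [exact lyz | right; exact (tree_lt_le_trans lxy lyz)]. Qed.

Lemma tree_lt_not_ge x y : tlt T x y -> ~ tle T y x.
Proof. intros lxy lyx. exact (tree_lt_irrefl (tree_lt_le_trans lxy lyx)). Qed.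

Lemma tree_le_comparable a b y :
  tle T a y -> tle T b y -> a = b \/ tlt T a b \/ tlt T b a.
Proof.
  intros [->|lay] [->|lby]; auto.
  apply (proj1 (proj2 (proj2 (proj2 HT)) y (proj2 (tree_lt_nodes lay)))); assumption.
Qed.

Lemma tree_least_below y (P : U -> Prop) :
  nodes T y -> (forall x, P x -> tlt T x y) -> (exists x, P x) ->
  exists m, P m /\ forall x, P x -> tle T m x.
Proof. intros hy; apply (proj2 (proj2 (proj2 (proj2 HT)) y hy)). Qed.

Lemma antichain_root_unique (A : U -> Prop) r1 r2 y :
  antichain T A -> A r1 -> A r2 -> tle T r1 y -> tle T r2 y -> r1 = r2.
Proof.
  intros hA h1 h2 l1 l2. apply NNPP; intro ne.
  destruct (hA r1 r2 h1 h2 ne) as [n12 n21].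
  destruct (tree_le_comparable l1 l2) as [e|[l|l]];
    [exact (ne e) | apply n12 | apply n21]; right; exact l.
Qed.

End TreeOrder.

Section Grafts.
Variables (U : Type) (T G : tree U) (o : U).
Hypothesis HG : is_graft T G o.

Lemma graft_tree : is_tree G.
Proof. apply HG. Qed.

Lemma graft_root_node : nodes T o.
Proof. destruct HG as (_ & _ & _ & ho & _); exact ho. Qed.

Lemma graft_root_lt_max v : max_nodes G v -> tlt T o v.
Proof. destruct HG as (_ & _ & _ & _ & hmax & _); apply hmax. Qed.

Lemma graft_max_antichain : antichain T (max_nodes G).
Proof. destruct HG as (_ & _ & _ & _ & _ & hanti & _); exact hanti. Qed.

Lemma graft_impl_not_node v : impl G o v -> ~ nodes T v.
Proof. destruct HG as (_ & _ & _ & _ & _ & _ & himpl); apply himpl. Qed.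

Lemma graft_root_not_down : is_tree T -> ~ down T (max_nodes G) o.
Proof.
  intros HT [m [hm lmo]].
  exact (tree_lt_not_ge HT (graft_root_lt_max hm) lmo).
Qed.

End Grafts.

Section Hybrid.
Variables (U : Type) (T : tree U) (I : Type) (g : I -> tree U) (o : I -> U).
Hypothesis HT : is_tree T.
Hypothesis HC : consistent T g o.

Local Notation Sp := (supp T g o).
Local Notation Im i := (impl (g i) (o i)).
Local Notation Mx i := (max_nodes (g i)).

Let graft i : is_graft T (g i) (o i) := proj1 HC i.
Let root_lt_max i r : Mx i r -> tlt T (o i) r := graft_root_lt_max (graft i) (v := r).

Lemma supp_impl_absurd i x : Sp x -> Im i x -> False.
Proof. intros [hx _] hix. exact (graft_impl_not_node (graft i) hix hx). Qed.

Lemma impl_index_unique i j x : Im i x -> Im j x -> i = j.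
Proof. intros hi hj. apply NNPP; intro ne. exact (proj1 (proj2 HC) i j ne x hi hj). Qed.

Lemma supp_above_root_down i a : Sp a -> tlt T (o i) a -> down T (Mx i) a.
Proof. intros [_ hexpl] l. apply NNPP; intro nd. exact (hexpl i (conj l nd)). Qed.

Lemma root_supp j : Sp (o j).
Proof.
  split; [exact (graft_root_node (graft j)) |].
  intros i [l nd]. destruct (classic (i = j)) as [<-|ne].
  - exact (tree_lt_irrefl HT l).
  - destruct (proj2 (proj2 HC) i j ne) as [[n _]|[[m [hm lm]]|d]].
    + apply n; right; exact l.
    + apply (tree_lt_irrefl HT (x := o i)).
      exact (tree_lt_trans HT l (tree_lt_le_trans HT (root_lt_max hm) lm)).
    + exact (nd d).
Qed.

Inductive hybr_step : U -> U -> Prop :=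
  | step_supp x y : Sp x -> Sp y -> tlt T x y -> hybr_step x y
  | step_impl i x y : Im i x -> Im i y -> tlt (g i) x y -> hybr_step x y
  | step_enter i x y : Sp x -> Im i y -> tle T x (o i) -> hybr_step x y
  | step_exit i r x y :
      Im i x -> Sp y -> Mx i r -> tle T r y -> tlt (g i) x r -> hybr_step x y
  | step_cross i j r x y : i <> j -> Im i x -> Im j y ->
      Mx i r -> tle T r (o j) -> tlt (g i) x r -> hybr_step x y.

Lemma hybr_ltE x y : hybr_lt T g o x y <-> hybr_step x y.
Proof.
  unfold hybr_lt, is_root; split.
  - intros [(hx & hy & l)|[(i & hx & hy & l)|[(i & hx & hy & l)|
           [(i & hx & hy & _ & r & [hr lr] & l)|(i & j & ne & hx & hy & _ & r & [hr lr] & l)]]]].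
    + exact (step_supp hx hy l).
    + exact (step_impl hx hy l).
    + exact (step_enter hx hy l).
    + exact (step_exit hx hy hr lr l).
    + exact (step_cross ne hx hy hr lr l).
  - intros [? ? hx hy l|i ? ? hx hy l|i ? ? hx hy l|i r ? ? hx hy hr lr l
           |i j r ? ? ne hx hy hr lr l].
    + left; auto.
    + right; left; eauto.
    + right; right; left; eauto.
    + do 3 right; left. exists i.
      refine (conj hx (conj hy (conj (ex_intro _ r (conj hr lr)) _))); eauto.
    + do 4 right. exists i, j.
      refine (conj ne (conj hx (conj hy (conj (ex_intro _ r (conj hr lr)) _)))); eauto.
Qed.

Ltac absurd_supp_impl :=
  exfalso; match goal with
  | h1 : supp _ _ _ ?z, h2 : impl _ _ ?z |- _ => exact (supp_impl_absurd h1 h2)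
  end.

Lemma step_into_supp x y : hybr_step x y -> Sp y ->
  (Sp x /\ tlt T x y) \/
  (exists i r, Im i x /\ Mx i r /\ tle T r y /\ tlt (g i) x r).
Proof.
  intros [? ? hx _ l|i ? ? hx hy l|i ? ? hx hy l|i r ? ? hx _ hr lr l
         |i j r ? ? ne hx hy hr lr l] hy';
    try absurd_supp_impl; eauto 10.
Qed.

Lemma step_into_impl j x y : hybr_step x y -> Im j y ->
  (Im j x /\ tlt (g j) x y) \/ (Sp x /\ tle T x (o j)) \/
  (exists i r, i <> j /\ Im i x /\ Mx i r /\ tle T r (o j) /\ tlt (g i) x r).
Proof.
  intros [? ? hx hy l|i ? ? hx hy l|i ? ? hx hy l|i r ? ? hx hy hr lr l
         |i k r ? ? ne hx hy hr lr l] hy';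
    try absurd_supp_impl;
    rewrite <- (impl_index_unique hy hy'); eauto 10.
Qed.

Lemma step_from_supp x y : hybr_step x y -> Sp x ->
  (Sp y /\ tlt T x y) \/ (exists k, Im k y /\ tle T x (o k)).
Proof.
  intros [? ? _ hy l|i ? ? hx hy l|i ? ? _ hy l|i r ? ? hx hy hr lr l
         |i j r ? ? ne hx hy hr lr l] hx';
    try absurd_supp_impl; eauto.
Qed.

Lemma step_from_impl i x y : hybr_step x y -> Im i x ->
  (Im i y /\ tlt (g i) x y) \/
  (Sp y /\ exists r, Mx i r /\ tle T r y /\ tlt (g i) x r) \/
  (exists k r, i <> k /\ Im k y /\ Mx i r /\ tle T r (o k) /\ tlt (g i) x r).
Proof.
  intros [? ? hx hy l|i' ? ? hx hy l|i' ? ? hx hy l|i' r ? ? hx hy hr lr l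
         |i' k r ? ? ne hx hy hr lr l] hx';
    try absurd_supp_impl;
    rewrite <- (impl_index_unique hx hx'); eauto 10.
Qed.

Lemma hybr_step_trans x y z : hybr_step x y -> hybr_step y z -> hybr_step x z.
Proof.
  intros [? ? hx hy l|i ? ? hx hy l|i ? ? hx hy l|i r ? ? hx hy hr lr l
         |i j r ? ? ne hx hy hr lr l] hyz.
  - destruct (step_from_supp hyz hy) as [[hz l']|[k [hz l']]].
    + exact (step_supp hx hz (tree_lt_trans HT l l')).
    + exact (step_enter hx hz (or_intror (tree_lt_le_trans HT l l'))).
  - destruct (step_from_impl hyz hy)
      as [[hz l']|[[hz [r [hr [lr l']]]]|[k [r [ne [hz [hr [lr l']]]]]]]];
      pose proof (tree_lt_trans (graft_tree (graft i)) l l') as lxz.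
    + exact (step_impl hx hz lxz).
    + exact (step_exit hx hz hr lr lxz).
    + exact (step_cross ne hx hz hr lr lxz).
  - destruct (step_from_impl hyz hy)
      as [[hz _]|[[hz [r [hr [lr _]]]]|[k [r [_ [hz [hr [lr _]]]]]]]].
    + exact (step_enter hx hz l).
    + exact (step_supp hx hz (tree_lt_le_trans HT (tree_le_lt_trans HT l (root_lt_max hr)) lr)).
    + exact (step_enter hx hz
        (or_intror (tree_lt_le_trans HT (tree_le_lt_trans HT l (root_lt_max hr)) lr))).
  - destruct (step_from_supp hyz hy) as [[hz l']|[k [hz l']]].
    + exact (step_exit hx hz hr (or_intror (tree_le_lt_trans HT lr l')) l).
    + pose proof (tree_le_trans HT lr l') as lrk.
      assert (ne : i <> k)
        by (intros <-; exact (tree_lt_not_ge HT (root_lt_max hr) lrk)).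
      exact (step_cross ne hx hz hr lrk l).
  - destruct (step_from_impl hyz hy)
      as [[hz _]|[[hz [r' [hr' [lr' _]]]]|[k [r' [_ [hz [hr' [lr' _]]]]]]]].
    + exact (step_cross ne hx hz hr lr l).
    + exact (step_exit hx hz hr
        (or_intror (tree_lt_le_trans HT (tree_le_lt_trans HT lr (root_lt_max hr')) lr')) l).
    + pose proof (tree_lt_le_trans HT (tree_le_lt_trans HT lr (root_lt_max hr')) lr') as lrk.
      assert (nik : i <> k)
        by (intros <-; exact (tree_lt_not_ge HT (root_lt_max hr) (or_intror lrk))).
      exact (step_cross nik hx hz hr (or_intror lrk) l).
Qed.

Lemma hybr_step_neq x y : hybr_step x y -> x <> y.
Proof.
  intros [? ? hx hy l|i ? ? hx hy l|i ? ? hx hy l|i r ? ? hx hy hr lr l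
         |i j r ? ? ne hx hy hr lr l] <-.
  - exact (tree_lt_irrefl HT l).
  - exact (tree_lt_irrefl (graft_tree (graft i)) l).
  - absurd_supp_impl.
  - absurd_supp_impl.
  - exact (ne (impl_index_unique hx hy)).
Qed.

Lemma hybr_step_nodes x y :
  hybr_step x y -> hybr_nodes T g o x /\ hybr_nodes T g o y.
Proof.
  unfold hybr_nodes.
  intros [? ? hx hy l|i ? ? hx hy l|i ? ? hx hy l|i r ? ? hx hy hr lr l
         |i j r ? ? ne hx hy hr lr l]; split; eauto.
Qed.

Lemma max_root_unique i r1 r2 y :
  Mx i r1 -> Mx i r2 -> tle T r1 y -> tle T r2 y -> r1 = r2.
Proof. exact (antichain_root_unique HT (graft_max_antichain (graft i))). Qed.

Lemma supp_impl_comparable_below y a i b r :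
  Sp y -> Sp a -> tlt T a y -> Im i b -> Mx i r -> tle T r y -> tlt (g i) b r ->
  hybr_step a b \/ hybr_step b a.
Proof.
  intros hy ha lay hb hr lry lbr.
  pose proof (tree_lt_le_trans HT (root_lt_max hr) lry) as loy.
  destruct (tree_le_comparable HT (or_intror lay) (or_intror loy)) as [e|[l|loa]].
  - left; exact (step_enter ha hb (or_introl e)).
  - left; exact (step_enter ha hb (or_intror l)).
  - destruct (tree_le_comparable HT (or_intror lay) lry) as [e|[lar|lra]].
    + right; exact (step_exit hb ha hr (or_introl (eq_sym e)) lbr).
    + (* a supported node above o_i lies above a maximal node of g_i, namely r *)
      exfalso. destruct (supp_above_root_down ha loa) as [m [hm lma]].
      rewrite (max_root_unique hm hr (tree_le_trans HT lma (or_intror lay)) lry) in lma.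
      exact (tree_lt_not_ge HT lar lma).
    + right; exact (step_exit hb ha hr (or_intror lra) lbr).
Qed.

Lemma impl_impl_comparable_below y i a r k b r' :
  Sp y -> Im i a -> Mx i r -> tle T r y -> tlt (g i) a r ->
  Im k b -> Mx k r' -> tle T r' y -> tlt (g k) b r' ->
  a = b \/ hybr_step a b \/ hybr_step b a.
Proof.
  intros hy ha hr lry lar hb hr' lr'y lbr'.
  destruct (classic (i = k)) as [<-|nik].
  - rewrite (max_root_unique hr' hr lr'y lry) in lbr'.
    destruct (tree_le_comparable (graft_tree (graft i)) (or_intror lar) (or_intror lbr'))
      as [e|[l|l]]; auto.
    + right; left; exact (step_impl ha hb l).
    + right; right; exact (step_impl hb ha l).
  - pose proof (tree_lt_le_trans HT (root_lt_max hr) lry) as loiy.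
    pose proof (tree_lt_le_trans HT (root_lt_max hr') lr'y) as loky.
    destruct (tree_le_comparable HT (or_intror loiy) (or_intror loky)) as [e|[l|l]].
    + exfalso. destruct (proj2 (proj2 HC) i k nik) as [[n _]|[d|d]].
      * exact (n (or_introl e)).
      * rewrite e in d. exact (graft_root_not_down (graft k) HT d).
      * rewrite <- e in d. exact (graft_root_not_down (graft i) HT d).
    + destruct (supp_above_root_down (root_supp k) l) as [m [hm lmok]].
      rewrite (max_root_unique hm hr (tree_le_trans HT lmok (or_intror loky)) lry) in lmok.
      right; left; exact (step_cross nik ha hb hr lmok lar).
    + destruct (supp_above_root_down (root_supp i) l) as [m [hm lmoi]].
      rewrite (max_root_unique hm hr' (tree_le_trans HT lmoi (or_intror loiy)) lr'y) in lmoi.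
      right; right; exact (step_cross (not_eq_sym nik) hb ha hr' lmoi lbr').
Qed.

Lemma hybr_step_comparable_below_supp y a b :
  Sp y -> hybr_step a y -> hybr_step b y -> a = b \/ hybr_step a b \/ hybr_step b a.
Proof.
  intros hy hay hby.
  destruct (step_into_supp hay hy) as [[ha lay]|(i & r & ha & hr & lry & lar)];
  destruct (step_into_supp hby hy) as [[hb lby]|(k & r' & hb & hr' & lr'y & lbr')].
  - destruct (tree_le_comparable HT (or_intror lay) (or_intror lby)) as [e|[l|l]]; auto.
    + right; left; exact (step_supp ha hb l).
    + right; right; exact (step_supp hb ha l).
  - right; exact (supp_impl_comparable_below hy ha lay hb hr' lr'y lbr').
  - right. destruct (supp_impl_comparable_below hy hb lby ha hr lry lar); auto.
  - exact (impl_impl_comparable_below hy ha hr lry lar hb hr' lr'y lbr').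
Qed.

Definition shadow x v : Prop := (Sp x /\ v = x) \/ (exists i, Im i x /\ v = o i).

Lemma shadow_exists x : hybr_nodes T g o x -> exists v, shadow x v.
Proof. intros [hx|[i hx]]; eexists; [left|right; exists i]; eauto. Qed.

Lemma shadow_supp x v : shadow x v -> Sp v.
Proof. intros [[hx ->]|[i [_ ->]]]; [exact hx | exact (root_supp i)]. Qed.

Lemma shadow_of_supp x v : Sp x -> shadow x v -> v = x.
Proof. intros hx [[_ e]|[i [hix _]]]; [exact e | absurd_supp_impl]. Qed.

Lemma shadow_of_impl i x v : Im i x -> shadow x v -> v = o i.
Proof.
  intros hix [[hx _]|[j [hjx e]]]; [absurd_supp_impl |].
  rewrite e; f_equal; exact (impl_index_unique hjx hix).
Qed.

Lemma hybr_step_shadow_le x z v w :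
  hybr_step x z -> shadow x v -> shadow z w -> tle T v w.
Proof.
  intros [? ? hx hz l|i ? ? hx hz l|i ? ? hx hz l|i r ? ? hx hz hr lr l
         |i j r ? ? ne hx hz hr lr l] hv hw.
  - rewrite (shadow_of_supp hx hv), (shadow_of_supp hz hw); right; exact l.
  - rewrite (shadow_of_impl hx hv), (shadow_of_impl hz hw); left; reflexivity.
  - rewrite (shadow_of_supp hx hv), (shadow_of_impl hz hw); exact l.
  - rewrite (shadow_of_impl hx hv), (shadow_of_supp hz hw).
    right; exact (tree_lt_le_trans HT (root_lt_max hr) lr).
  - rewrite (shadow_of_impl hx hv), (shadow_of_impl hz hw).
    right; exact (tree_lt_le_trans HT (root_lt_max hr) lr).
Qed.

Lemma hybr_step_same_shadow x z v :
  hybr_step x z -> shadow x v -> shadow z v ->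
  x = v \/ exists i, Im i x /\ Im i z /\ tlt (g i) x z.
Proof.
  intros [? ? hx hz l|i ? ? hx hz l|i ? ? hx hz l|i r ? ? hx hz hr lr l
         |i j r ? ? ne hx hz hr lr l] hv hw.
  - exfalso. rewrite <- (shadow_of_supp hx hv), <- (shadow_of_supp hz hw) in l.
    exact (tree_lt_irrefl HT l).
  - right; exists i; auto.
  - left; exact (eq_sym (shadow_of_supp hx hv)).
  - exfalso. rewrite <- (shadow_of_supp hz hw), (shadow_of_impl hx hv) in lr.
    exact (tree_lt_not_ge HT (root_lt_max hr) lr).
  - exfalso. rewrite <- (shadow_of_impl hz hw), (shadow_of_impl hx hv) in lr.
    exact (tree_lt_not_ge HT (root_lt_max hr) lr).
Qed.

Lemma shadow_lt_below_supp x y v : hybr_step x y -> Sp y -> shadow x v -> tlt T v y.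
Proof.
  intros hxy hy hv.
  assert (hyy : shadow y y) by (left; split; [exact hy | reflexivity]).
  destruct (hybr_step_shadow_le hxy hv hyy) as [<-|l]; [exfalso | exact l].
  destruct (hybr_step_same_shadow hxy hv hyy) as [e|[i [_ [hiv _]]]].
  - exact (hybr_step_neq hxy e).
  - absurd_supp_impl.
Qed.

Lemma impl_below_supp x y i : hybr_step x y -> Sp y -> Im i x ->
  exists r, Mx i r /\ tle T r y /\ tlt (g i) x r.
Proof.
  intros hxy hy hix.
  destruct (step_into_supp hxy hy) as [[hx _]|(k & r & hkx & hr & lr & l)];
    [absurd_supp_impl |].
  rewrite (impl_index_unique hkx hix) in *; eauto.
Qed.

Lemma hybr_step_least_below_supp y (P : U -> Prop) :
  Sp y -> (forall x, P x -> hybr_step x y) -> (exists x, P x) ->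
  exists m, P m /\ forall x, P x -> m = x \/ hybr_step m x.
Proof.
  intros hy hP [x1 hx1].
  destruct (tree_least_below HT (P := fun v => exists x, P x /\ shadow x v) (proj1 hy))
    as [v0 [[x0 [hx0 hs0]] hmin]].
  { intros v [x [hx hv]]. exact (shadow_lt_below_supp (hP x hx) hy hv). }
  { destruct (shadow_exists (proj1 (hybr_step_nodes (hP x1 hx1)))) as [v hv]; eauto. }
  assert (fiber : forall x m, P x -> hybr_step x m -> shadow m v0 ->
            x = v0 \/ exists i, Im i x /\ Im i m /\ tlt (g i) x m).
  { intros x m hx hxm hm.
    destruct (shadow_exists (proj1 (hybr_step_nodes hxm))) as [v hv].
    assert (e : v = v0).
    { destruct (hybr_step_shadow_le hxm hv hm) as [e|l]; [exact e | exfalso].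
      exact (tree_lt_not_ge HT l (hmin v (ex_intro _ x (conj hx hv)))). }
    rewrite e in hv. exact (hybr_step_same_shadow hxm hv hm). }
  assert (least_in_fiber : forall m, P m -> shadow m v0 ->
            (forall x, P x -> ~ hybr_step x m) ->
            exists m, P m /\ forall x, P x -> m = x \/ hybr_step m x).
  { intros m hm hsm nlt. exists m; split; [exact hm |]. intros x hx.
    destruct (hybr_step_comparable_below_supp hy (hP m hm) (hP x hx)) as [e|[l|l]];
      auto; exfalso; exact (nlt x hx l). }
  destruct (classic (P v0)) as [hv0|nv0].
  - assert (hsv0 : shadow v0 v0) by (left; split; [exact (shadow_supp hs0) | reflexivity]).
    apply (least_in_fiber v0 hv0 hsv0). intros x hx lxv.
    destruct (fiber x v0 hx lxv hsv0) as [e|[i [_ [hiv _]]]].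
    + exact (hybr_step_neq lxv e).
    + exact (supp_impl_absurd (shadow_supp hs0) hiv).
  - destruct hs0 as [[_ e]|[i [hix0 e]]]; [subst; contradiction |].
    destruct (impl_below_supp (hP x0 hx0) hy hix0) as [r [hr [lry _]]].
    destruct (tree_least_below (graft_tree (graft i)) (P := fun x => P x /\ Im i x) (proj1 hr))
      as [m [[hm him] hmmin]].
    { intros x [hx hix]. destruct (impl_below_supp (hP x hx) hy hix) as [r' [hr' [lr'y l]]].
      rewrite (max_root_unique hr' hr lr'y lry) in l; exact l. }
    { eauto. }
    assert (hsm : shadow m v0) by (right; exists i; auto).
    apply (least_in_fiber m hm hsm). intros x hx lxm.
    destruct (fiber x m hx lxm hsm) as [->|[k [hkx [hkm l]]]]; [contradiction |].
    rewrite (impl_index_unique hkm him) in hkx, l.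
    exact (tree_lt_not_ge (graft_tree (graft i)) l (hmmin x (conj hx hkx))).
Qed.

Lemma root_step_impl j y : Im j y -> hybr_step (o j) y.
Proof. intro hy. exact (step_enter (root_supp j) hy (or_introl eq_refl)). Qed.

Lemma step_into_impl_via_root j x y : hybr_step x y -> Im j y ->
  (Im j x /\ tlt (g j) x y) \/ x = o j \/ hybr_step x (o j).
Proof.
  intros hxy hy.
  destruct (step_into_impl hxy hy) as [h|[[hx [e|l]]|(i & r & _ & hx & hr & lr & l)]]; auto.
  - right; right; exact (step_supp hx (root_supp j) l).
  - right; right; exact (step_exit hx (root_supp j) hr lr l).
Qed.

Lemma hybr_step_comparable_below_impl j y a b :
  Im j y -> hybr_step a y -> hybr_step b y -> a = b \/ hybr_step a b \/ hybr_step b a.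
Proof.
  intros hy hay hby.
  destruct (step_into_impl_via_root hay hy) as [[ha lay]|[->|hao]];
  destruct (step_into_impl_via_root hby hy) as [[hb lby]|[->|hbo]]; auto.
  - destruct (tree_le_comparable (graft_tree (graft j)) (or_intror lay) (or_intror lby))
      as [e|[l|l]]; auto.
    + right; left; exact (step_impl ha hb l).
    + right; right; exact (step_impl hb ha l).
  - right; right; exact (root_step_impl ha).
  - right; right; exact (hybr_step_trans hbo (root_step_impl ha)).
  - right; left; exact (root_step_impl hb).
  - right; left; exact (hybr_step_trans hao (root_step_impl hb)).
  - exact (hybr_step_comparable_below_supp (root_supp j) hao hbo).
Qed.

Lemma hybr_step_least_below_impl j y (P : U -> Prop) :
  Im j y -> (forall x, P x -> hybr_step x y) -> (exists x, P x) ->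
  exists m, P m /\ forall x, P x -> m = x \/ hybr_step m x.
Proof.
  intros hy hP hne.
  destruct (classic (exists x, P x /\ hybr_step x (o j))) as [hbelow|nbelow].
  - destruct (hybr_step_least_below_supp (P := fun x => P x /\ hybr_step x (o j))
                (root_supp j) (fun x h => proj2 h) hbelow) as [m [[hm lmo] hmin]].
    exists m; split; [exact hm |]. intros x hx.
    destruct (step_into_impl_via_root (hP x hx) hy) as [[hix _]|[->|lxo]].
    + right; exact (hybr_step_trans lmo (root_step_impl hix)).
    + right; exact lmo.
    + exact (hmin x (conj hx lxo)).
  - assert (hP' : forall x, P x -> x = o j \/ (Im j x /\ tlt (g j) x y)).
    { intros x hx.
      destruct (step_into_impl_via_root (hP x hx) hy) as [h|[e|lxo]]; auto.
      exfalso; exact (nbelow (ex_intro _ x (conj hx lxo))). }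
    destruct (classic (P (o j))) as [ho|no].
    + exists (o j); split; [exact ho |]. intros x hx.
      destruct (hP' x hx) as [e|[hix _]]; [left; auto | right; exact (root_step_impl hix)].
    + assert (hPj : forall x, P x -> Im j x /\ tlt (g j) x y).
      { intros x hx. destruct (hP' x hx) as [e|h]; [rewrite e in hx; contradiction | exact h]. }
      destruct (tree_least_below (graft_tree (graft j)) (P := P) (proj1 hy)
                  (fun x hx => proj2 (hPj x hx)) hne) as [m [hm hmin]].
      exists m; split; [exact hm |]. intros x hx.
      destruct (hmin x hx) as [e|l]; [left; exact e |].
      right; exact (step_impl (proj1 (hPj m hm)) (proj1 (hPj x hx)) l).
Qed.

Lemma hybr_pred_well_ordered y :
  hybr_nodes T g o y -> well_ordered_by (hybr T g o) (fun v => hybr_lt T g o v y).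
Proof.
  unfold well_ordered_by, tle; simpl. setoid_rewrite hybr_ltE.
  intros [hy|[j hy]]; split.
  - intros a b; exact (hybr_step_comparable_below_supp hy).
  - intros P; exact (hybr_step_least_below_supp hy).
  - intros a b; exact (hybr_step_comparable_below_impl hy).
  - intros P; exact (hybr_step_least_below_impl hy).
Qed.

End Hybrid.

Theorem mainTheorem7 (U : Type) (T : tree U) (I : Type)
  (g : I -> tree U) (o : I -> U) :
  is_tree T -> consistent T g o -> is_tree (hybr T g o).
Proof.
  intros HT HC. split; [|split; [|split]]; simpl.
  - intros x y hxy%hybr_ltE. exact (hybr_step_nodes hxy).
  - intros x hxx%hybr_ltE. exact (hybr_step_neq HT HC hxx eq_refl).
  - intros x y z hxy%hybr_ltE hyz%hybr_ltE.
    apply hybr_ltE. exact (hybr_step_trans HT HC hxy hyz).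
  - exact (hybr_pred_well_ordered HT HC).
Qed.
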